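(* Let $(U,\tau_R,\rho)$ be a general ordered topological approximation space and $A\subseteq U$. Then $B_{SInc}(A)\subseteq B_{\alpha Inc}(A)\subseteq B_{Inc}(A)$ and $B_{SDec}(A)\subseteq B_{\alpha Dec}(A)\subseteq B_{Dec}(A)$.
   Context: A general ordered topological approximation space (GOTAS) is a triple $(U,\tau_R,\rho)$ where $U$ is a non-empty set, $R$ is a binary relation on $U$, $\tau_R$ is a topology on $U$ generated by $R$, and $\rho$ is a partial order on $U$. A subset $A\subseteq U$ is increasing (resp. decreasing) if whenever $a\in A$, $x\in U$ and $a\,\rho\,x$ (resp. $x\,\rho\,a$), then $x\in A$. For $A\subseteq U$: $\underline{R}_{Inc}(A)$ is the greatest subset of $A$ that is both $\tau_R$-open and increasing; $\underline{R}_{Dec}(A)$ is the greatest subset of $A$ that is $\tau_R$-open and decreasing; $\overline{R}^{Inc}(A)$ is the smallest superset of $A$ that is $\tau_R$-closed and increasing; $\overline{R}^{Dec}(A)$ is the smallest superset of $A$ that is $\tau_R$-closed and decreasing. With $D\in\{Inc,Dec\}$: $\underline{S}_{D}(A)=A\cap\overline{R}^{D}(\underline{R}_{D}(A))$, $\overline{S}^{D}(A)=A\cup\underline{R}_{D}(\overline{R}^{D}(A))$, $\underline{\alpha}_{D}(A)=A\cap\underline{R}_{D}(\overline{R}^{D}(\underline{R}_{D}(A)))$, $\overline{\alpha}^{D}(A)=A\cup\overline{R}^{D}(\underline{R}_{D}(\overline{R}^{D}(A)))$. The boundary regions are $B_{D}(A)=\overline{R}^{D}(A)\setminus\underline{R}_{D}(A)$,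 $B_{SD}(A)=\overline{S}^{D}(A)\setminus\underline{S}_{D}(A)$, and $B_{\alpha D}(A)=\overline{\alpha}^{D}(A)\setminus\underline{\alpha}_{D}(A)$. *)

Definition subset {U : Type} (A B : U -> Prop) : Prop := forall x, A x -> B x.

Definition after_set {U : Type} (R : U -> U -> Prop) (x : U) : U -> Prop :=
  fun y => R x y.

Definition is_topology {U : Type} (T : (U -> Prop) -> Prop) : Prop :=
  T (fun _ => True) /\ T (fun _ => False) /\
  (forall F : (U -> Prop) -> Prop, (forall A, F A -> T A) ->
      T (fun x => exists A, F A /\ A x)) /\
  (forall A B, T A -> T B -> T (fun x => A x /\ B x)).

(* tau_R : the topology generated by R, i.e. the smallest topology having the
   after-sets xR (x in U) as a subbase. [tauR_open R A] : A is tau_R-open. *)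
Definition tauR_open {U : Type} (R : U -> U -> Prop) (A : U -> Prop) : Prop :=
  forall T : (U -> Prop) -> Prop, is_topology T ->
    (forall x, T (after_set R x)) -> T A.

Definition tauR_closed {U : Type} (R : U -> U -> Prop) (A : U -> Prop) : Prop :=
  tauR_open R (fun x => ~ A x).

Definition is_partial_order {U : Type} (rho : U -> U -> Prop) : Prop :=
  (forall x, rho x x) /\
  (forall x y, rho x y -> rho y x -> x = y) /\
  (forall x y z, rho x y -> rho y z -> rho x z).

Definition increasing {U : Type} (rho : U -> U -> Prop) (A : U -> Prop) : Prop :=
  forall a x, A a -> rho a x -> A x.

Definition decreasing {U : Type} (rho : U -> U -> Prop) (A : U -> Prop) : Prop :=
  forall a x, A a -> rho x a -> A x.

Inductive Dir : Type := Inc | Dec.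

Definition monotone {U : Type} (rho : U -> U -> Prop) (D : Dir) (A : U -> Prop) : Prop :=
  match D with Inc => increasing rho A | Dec => decreasing rho A end.

(* underline{R}_D(A): greatest tau_R-open D-monotone subset of A
   (the union of all such subsets, which is itself one). *)
Definition lowR {U : Type} (R rho : U -> U -> Prop) (D : Dir) (A : U -> Prop) : U -> Prop :=
  fun x => exists B, tauR_open R B /\ monotone rho D B /\ subset B A /\ B x.

(* overline{R}^D(A): smallest tau_R-closed D-monotone superset of A
   (the intersection of all such supersets, which is itself one). *)
Definition uppR {U : Type} (R rho : U -> U -> Prop) (D : Dir) (A : U -> Prop) : U -> Prop :=
  fun x => forall B, tauR_closed R B -> monotone rho D B -> subset A B -> B x.

Definition lowS {U : Type} (R rho : U -> U -> Prop) (D : Dir) (A : U -> Prop) : U -> Prop :=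
  fun x => A x /\ uppR R rho D (lowR R rho D A) x.

Definition uppS {U : Type} (R rho : U -> U -> Prop) (D : Dir) (A : U -> Prop) : U -> Prop :=
  fun x => A x \/ lowR R rho D (uppR R rho D A) x.

Definition lowAlpha {U : Type} (R rho : U -> U -> Prop) (D : Dir) (A : U -> Prop) : U -> Prop :=
  fun x => A x /\ lowR R rho D (uppR R rho D (lowR R rho D A)) x.

Definition uppAlpha {U : Type} (R rho : U -> U -> Prop) (D : Dir) (A : U -> Prop) : U -> Prop :=
  fun x => A x \/ uppR R rho D (lowR R rho D (uppR R rho D A)) x.

Definition bnd {U : Type} (R rho : U -> U -> Prop) (D : Dir) (A : U -> Prop) : U -> Prop :=
  fun x => uppR R rho D A x /\ ~ lowR R rho D A x.

Definition bndS {U : Type} (R rho : U -> U -> Prop) (D : Dir) (A : U -> Prop) : U -> Prop :=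
  fun x => uppS R rho D A x /\ ~ lowS R rho D A x.

Definition bndAlpha {U : Type} (R rho : U -> U -> Prop) (D : Dir) (A : U -> Prop) : U -> Prop :=
  fun x => uppAlpha R rho D A x /\ ~ lowAlpha R rho D A x.


(* The lower approximation is contractive and the upper one extensive, and
   each absorbs any set squeezed between it and its argument.  Comparing the
   defining formulas then gives [lowR <= lowAlpha <= lowS] and
   [uppS <= uppAlpha <= uppR], and the boundary inclusions follow. *)

Section Approximations.

Variables (U : Type) (R rho : U -> U -> Prop) (D : Dir).

Lemma lowR_sub (A : U -> Prop) : subset (lowR R rho D A) A.
Proof. intros x [B [_ [_ [HBA HBx]]]]; exact (HBA x HBx). Qed.

Lemma sub_uppR (A : U -> Prop) : subset A (uppR R rho D A).
Proof. intros x HAx B _ _ HAB; exact (HAB x HAx). Qed.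

Lemma lowR_sub_lowR (A B : U -> Prop) :
  subset (lowR R rho D A) B -> subset (lowR R rho D A) (lowR R rho D B).
Proof.
  intros HAB x [C [HCo [HCm [HCA HCx]]]].
  exists C; repeat split; auto.
  intros y HCy; apply HAB; exists C; auto.
Qed.

Lemma uppR_sub_uppR (A B : U -> Prop) :
  subset B (uppR R rho D A) -> subset (uppR R rho D B) (uppR R rho D A).
Proof.
  intros HBA x HBx C HCc HCm HAC.
  apply HBx; auto.
  intros y HBy; exact (HBA y HBy C HCc HCm HAC).
Qed.

Lemma lowAlpha_sub_lowS (A : U -> Prop) :
  subset (lowAlpha R rho D A) (lowS R rho D A).
Proof. intros x [HAx Hx]; split; [exact HAx | exact (lowR_sub _ x Hx)]. Qed.

Lemma uppS_sub_uppAlpha (A : U -> Prop) :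
  subset (uppS R rho D A) (uppAlpha R rho D A).
Proof. intros x [HAx | Hx]; [left; exact HAx | right; exact (sub_uppR _ x Hx)]. Qed.

Lemma lowR_sub_lowAlpha (A : U -> Prop) :
  subset (lowR R rho D A) (lowAlpha R rho D A).
Proof.
  intros x Hx; split; [exact (lowR_sub A x Hx) |].
  exact (lowR_sub_lowR A _ (sub_uppR _) x Hx).
Qed.

Lemma uppAlpha_sub_uppR (A : U -> Prop) :
  subset (uppAlpha R rho D A) (uppR R rho D A).
Proof.
  intros x [HAx | Hx]; [exact (sub_uppR A x HAx) |].
  exact (uppR_sub_uppR A _ (lowR_sub _) x Hx).
Qed.

Lemma bndS_sub_bndAlpha (A : U -> Prop) :
  subset (bndS R rho D A) (bndAlpha R rho D A).
Proof.
  intros x [Hupp Hlow]; split.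
  - exact (uppS_sub_uppAlpha A x Hupp).
  - intros Hx; exact (Hlow (lowAlpha_sub_lowS A x Hx)).
Qed.

Lemma bndAlpha_sub_bnd (A : U -> Prop) :
  subset (bndAlpha R rho D A) (bnd R rho D A).
Proof.
  intros x [Hupp Hlow]; split.
  - exact (uppAlpha_sub_uppR A x Hupp).
  - intros Hx; exact (Hlow (lowR_sub_lowAlpha A x Hx)).
Qed.

End Approximations.

Theorem proposition3p19 (U : Type) (u0 : U) (R rho : U -> U -> Prop)
  (Hrho : is_partial_order rho) (A : U -> Prop) :
  (subset (bndS R rho Inc A) (bndAlpha R rho Inc A) /\
   subset (bndAlpha R rho Inc A) (bnd R rho Inc A)) /\
  (subset (bndS R rho Dec A) (bndAlpha R rho Dec A) /\
   subset (bndAlpha R rho Dec A) (bnd R rho Dec A)).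
Proof.
  split; split; auto using bndS_sub_bndAlpha, bndAlpha_sub_bnd.
Qed.
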